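(* Let $M_1 \in \mathbb{Z}^{m\times m}$ be nonsingular, $M_2 \in \mathbb{Z}^{\ell_2 \times m}$, $F \in \mathbb{Z}^{n\times m}$, and let $(S,W)$ be a Smith massager for $M_1$. Then $$\mathcal{R}\left(\begin{bmatrix} M_1 \\ M_2 \end{bmatrix}, F\right) = \mathcal{R}\left(\begin{bmatrix} S \\ \mathrm{colmod}(M_2W,S)\end{bmatrix}, \mathrm{colmod}(FW,S)\right).$$
   Context: For an integer matrix $A$, $\mathcal{L}(A)$ denotes the lattice of all $\mathbb{Z}$-linear combinations of the rows of $A$. For $M \in \mathbb{Z}^{\ell \times m}$ of full column rank and $F \in \mathbb{Z}^{n \times m}$, the integer relations lattice is $\mathcal{R}(M,F) := \{p \in \mathbb{Z}^{1\times n} : pF \in \mathcal{L}(M)\}$. For a diagonal $S \in \mathbb{Z}_{\ge 0}^{m\times m}$ with positive diagonal and $A$ with $m$ columns, $\mathrm{colmod}(A,S)$ is the matrix obtained from $A$ by replacing each entry in column $j$ by its residue in $\{0,\dots,S_{jj}-1\}$ modulo $S_{jj}$. ''$A \equiv B \bmod S$'' means every row of $A-B$ lies in $\mathcal{L}(S)$. A Smith form is a diagonal matrix $\mathrm{diag}(s_1,\dots,s_m)$ with nonnegative integer entries and $s_i \mid s_{i+1}$; the Smith form of a nonsingular $M$ is the unique such matrix $UMV$ with $U,V$ unimodular. If $M \in \mathbb{Z}^{m\times m}$ is nonsingular with Smith form $S$, a pair $(S,W)$ with $W \in \mathbb{Z}^{m\times m}$ is a Smith massager for $M$ if (i) $MW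 \equiv 0 \bmod S$ and (ii) there exists $Z \in \mathbb{Z}^{m\times m}$ with $ZW \equiv I_m \bmod S$. *)

From HB Require Import structures.
From mathcomp Require Import all_boot all_order all_algebra.
Set Implicit Arguments. Unset Strict Implicit. Unset Printing Implicit Defensive.
Import Order.TTheory GRing.Theory Num.Theory.
Local Open Scope ring_scope.

Definition in_lattice (l m : nat) (A : 'M[int]_(l, m)) (v : 'rV[int]_m) : Prop :=
  exists x : 'rV[int]_l, v = x *m A.

Definition in_relations (l m n : nat) (M : 'M[int]_(l, m)) (F : 'M[int]_(n, m))
  (p : 'rV[int]_n) : Prop := in_lattice M (p *m F).

Definition colmod (k m : nat) (A : 'M[int]_(k, m)) (S : 'M[int]_m) : 'M[int]_(k, m) :=
  \matrix_(i < k, j < m) ((A i j) %% (S j j))%Z.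

Definition congr_mod (k m : nat) (A B : 'M[int]_(k, m)) (S : 'M[int]_m) : Prop :=
  forall i : 'I_k, in_lattice S (row i (A - B)).

Definition is_smith_diag (m : nat) (S : 'M[int]_m) : Prop :=
  (forall i j : 'I_m, i != j -> S i j = 0) /\
  (forall i : 'I_m, 0 <= S i i) /\
  (forall i j : 'I_m, (i <= j)%N -> (S i i %| S j j)%Z).

Definition smith_form_of (m : nat) (M S : 'M[int]_m) : Prop :=
  is_smith_diag S /\
  exists U V : 'M[int]_m, U \in unitmx /\ V \in unitmx /\ S = U *m M *m V.

Definition smith_massager (m : nat) (M S W : 'M[int]_m) : Prop :=
  smith_form_of M S /\
  congr_mod (M *m W) 0 S /\
  exists Z : 'M[int]_m, congr_mod (Z *m W) 1%:M S.

From HB Require Import structures.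
From mathcomp Require Import all_boot all_order all_algebra zify.
Set Implicit Arguments. Unset Strict Implicit. Unset Printing Implicit Defensive.
Import Order.TTheory GRing.Theory Num.Theory.
Local Open Scope ring_scope.

(* Write S = U M1 V with U, V unimodular and put W' := V^-1 W.  Then S W' = U (M1 W) is
   0 mod S and (Z V) W' = Z W is I mod S, so v |-> v W' induces a surjective, hence
   bijective, endomorphism of the finite group Z^m / L(S).  Its injectivity says that
   v W' lies in L(S) only when v does, i.e. L(M1) = { v : v W in L(S) }.  The theorem
   follows by eliminating the M1-block of [M1; M2] with this description and reducing
   F W and M2 W modulo S, which does not change membership in L(S). *)

Lemma in_lattice_mulmx l m (A : 'M[int]_(l, m)) (x : 'rV[int]_l) : in_lattice A (x *m A).
Proof. by exists x. Qed.

Lemma in_lattice_addr l m (A : 'M[int]_(l, m)) (u w : 'rV[int]_m) :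
  in_lattice A w -> in_lattice A (u + w) <-> in_lattice A u.
Proof.
move=> [x ->]; split=> [[y hy]|[y ->]]; last by exists (y + x); rewrite mulmxDl.
by exists (y - x); rewrite mulmxBl -hy addrK.
Qed.

Lemma in_lattice_col_mx l1 l2 m (A : 'M[int]_(l1, m)) (B : 'M[int]_(l2, m)) v :
  in_lattice (col_mx A B) v <-> exists y, in_lattice A (v - y *m B).
Proof.
split=> [[x ->]|[y [x hx]]].
  by exists (rsubmx x); exists (lsubmx x); rewrite -{1}(hsubmxK x) mul_row_col addrK.
by exists (row_mx x y); rewrite mul_row_col -hx subrK.
Qed.

Lemma congr_mod_mulmx k m (A B : 'M[int]_(k, m)) (S : 'M[int]_m) :
  congr_mod A B S -> exists X, A - B = X *m S.
Proof.
move=> hAB; have [X hX] := fin_all_exists hAB.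
by exists (\matrix_i X i); apply/row_matrixP => i; rewrite row_mul rowK -hX.
Qed.

Section DiagonalModulus.

Variables (m : nat) (S : 'M[int]_m).
Hypothesis S_diag : forall i j : 'I_m, i != j -> S i j = 0.

Lemma mulmx_diag_entry k (X : 'M[int]_(k, m)) i j : (X *m S) i j = X i j * S j j.
Proof.
rewrite !mxE (bigD1 j) //= big1 ?addr0 // => l /negbTE lj.
by rewrite S_diag ?mulr0 // lj.
Qed.

Definition coldiv k (A : 'M[int]_(k, m)) : 'M[int]_(k, m) :=
  \matrix_(i, j) (A i j %/ S j j)%Z.

Lemma colmodE k (A : 'M[int]_(k, m)) : A = colmod A S + coldiv A *m S.
Proof.
by apply/matrixP => i j; rewrite [RHS]mxE mulmx_diag_entry !mxE addrC -divz_eq.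
Qed.

Lemma colmodDmul k (A X : 'M[int]_(k, m)) : colmod (A + X *m S) S = colmod A S.
Proof.
by apply/matrixP => i j; rewrite [LHS]mxE [in LHS]mxE mulmx_diag_entry [RHS]mxE addrC modzMDl.

Qed.

Lemma colmod_id k (A : 'M[int]_(k, m)) : colmod (colmod A S) S = colmod A S.
Proof. by apply/matrixP => i j; rewrite !mxE modz_mod. Qed.

Lemma in_lattice_colmod u : colmod u S = 0 -> in_lattice S u.
Proof. by move=> hu; rewrite (colmodE u) hu add0r; exists (coldiv u). Qed.

Lemma in_lattice_mulmx_colmod k (x : 'rV[int]_k) (A : 'M[int]_(k, m)) u :
  in_lattice S (x *m colmod A S + u) <-> in_lattice S (x *m A + u).
Proof.
have -> : x *m A + u = x *m colmod A S + u + (x *m coldiv A) *m S.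
  by rewrite {1}(colmodE A) mulmxDr mulmxA addrAC.
exact: iff_sym (in_lattice_addr _ (in_lattice_mulmx _ _)).
Qed.

Hypothesis S_pos : forall j, 0 < S j j.

Let K := (\max_j absz (S j j))%N.

(* Residues mod S have entries in [0, K], so they are faithfully coded by 'rV['I_K.+1]_m. *)
Let encode (u : 'rV[int]_m) : 'rV['I_K.+1]_m := map_mx (fun x => inord (absz x)) u.
Let decode (t : 'rV['I_K.+1]_m) : 'rV[int]_m := map_mx (fun i : 'I_K.+1 => (i : nat)%:Z) t.

Lemma encodeK : cancel decode encode.
Proof. by move=> t; apply/matrixP => i j; rewrite !mxE inord_val. Qed.

Lemma decode_encode_colmod u : decode (encode (colmod u S)) = colmod u S.
Proof.
apply/matrixP => i j; rewrite !mxE.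
have r_ge0 : 0 <= (u i j %% S j j)%Z by rewrite modz_ge0 // gt_eqF.
have r_lt : (absz (u i j %% S j j)%Z < absz (S j j))%N.
  by rewrite -ltz_nat !gez0_abs ?ltz_pmod // ltW.
have S_le : (absz (S j j) <= K)%N by rewrite /K (bigD1 j) //= leq_maxl.
by rewrite inordK ?gez0_abs //; lia.
Qed.

Lemma in_lattice_mulmx_reflect (W X Z R : 'M[int]_m) :
  S *m W = X *m S -> Z *m W = 1%:M + R *m S ->
  forall u, in_lattice S (u *m W) -> in_lattice S u.
Proof.
move=> SW ZW u [x hu].
have colmod_mulW v : colmod (colmod v S *m W) S = colmod (v *m W) S.
  by rewrite {2}(colmodE v) mulmxDl -mulmxA SW mulmxA colmodDmul.
pose g t := encode (colmod (decode t *m W) S).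
pose A := [set t | colmod (decode t) S == decode t].
have A_colmod v : encode (colmod v S) \in A by rewrite inE decode_encode_colmod colmod_id.
have A_sub : A \subset g @: A.
  apply/subsetP => t; rewrite inE => /eqP t_red.
  apply/imsetP; exists (encode (colmod (decode t *m Z) S)); first exact: A_colmod.
  rewrite /g decode_encode_colmod colmod_mulW -mulmxA ZW mulmxDr mulmx1 mulmxA.
  by rewrite colmodDmul t_red encodeK.
have g_inj : {in A &, injective g}.
  by apply/imset_injP; rewrite eqn_leq leq_imset_card subset_leq_card.
have : encode (colmod u S) = encode (colmod 0 S).
  apply: g_inj; rewrite ?A_colmod // /g !decode_encode_colmod !colmod_mulW mul0mx.
  by rewrite hu -(add0r (x *m S)) colmodDmul.
move=> /(congr1 decode); rewrite !decode_encode_colmod => u_red.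
by apply: in_lattice_colmod; rewrite u_red; apply/matrixP => i j; rewrite !mxE mod0z.
Qed.

End DiagonalModulus.

Lemma smith_diag_pos m (S : 'M[int]_m) :
  is_smith_diag S -> \det S != 0 -> forall j, 0 < S j j.
Proof.
move=> [S_diag [S_ge0 _]]; have S_trig : is_trig_mx S.
  apply/is_diag_mx_is_trig/is_diag_mxP => i j ij; apply: S_diag.
  by apply: contra ij => /eqP ->.
rewrite det_trig // => /prodf_neq0 S_neq0 j.
by rewrite lt_def S_ge0 andbT S_neq0.
Qed.

Lemma smith_massager_latticeE m (M S W : 'M[int]_m) :
  \det M != 0 -> smith_massager M S W ->
  forall v, in_lattice M v <-> in_lattice S (v *m W).
Proof.
move=> detM [[S_smith [U [V [U_unit [V_unit SE]]]]] [MW [Z ZW]]].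
have [X MWE] := congr_mod_mulmx MW; rewrite subr0 in MWE.
have [R ZWE] := congr_mod_mulmx ZW.
have S_diag := S_smith.1.
have S_pos : forall j, 0 < S j j.
  apply: smith_diag_pos => //; rewrite SE !det_mulmx !mulf_neq0 //.
    by apply: contraTneq U_unit => detU0; rewrite unitmxE detU0 unitr0.
  by apply: contraTneq V_unit => detV0; rewrite unitmxE detV0 unitr0.
have SV : S *m invmx V = U *m M by rewrite SE mulmxK.
move=> v; split=> [[x ->]|vW].
  by exists (x *m X); rewrite -mulmxA MWE mulmxA.
pose W' := invmx V *m W.
have VW' : V *m W' = W by rewrite mulmxA mulmxV // mul1mx.
have SW' : S *m W' = (U *m X) *m S by rewrite mulmxA SV -!mulmxA MWE.
have ZW' : (Z *m V) *m W' = 1%:M + R *m S by rewrite -mulmxA VW' -ZWE addrC subrK.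
have vVW' : in_lattice S ((v *m V) *m W') by rewrite -mulmxA VW'.
have [y vVE] := in_lattice_mulmx_reflect S_diag S_pos SW' ZW' vVW'.
by exists (y *m U); rewrite -(mulmxK V_unit v) vVE -[LHS]mulmxA SV mulmxA.
Qed.

Theorem mainTheorem5 (m l2 n : nat) (M1 : 'M[int]_m) (M2 : 'M[int]_(l2, m))
  (F : 'M[int]_(n, m)) (S W : 'M[int]_m) :
  \det M1 != 0 ->
  smith_massager M1 S W ->
  forall p : 'rV[int]_n,
    in_relations (col_mx M1 M2) F p <->
    in_relations (col_mx S (colmod (M2 *m W) S)) (colmod (F *m W) S) p.
Proof.
move=> detM1 massager p; have S_diag := massager.1.1.1.
have reduce y : in_lattice M1 (p *m F - y *m M2) <->
    in_lattice S (p *m colmod (F *m W) S - y *m colmod (M2 *m W) S).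
  rewrite (smith_massager_latticeE detM1 massager) mulmxBl -!mulmxA.
  rewrite (in_lattice_mulmx_colmod S_diag p) !(addrC (p *m _)) -!mulNmx.
  by rewrite (in_lattice_mulmx_colmod S_diag (- y)).
rewrite /in_relations !in_lattice_col_mx.
by split=> -[y /reduce hy]; exists y.
Qed.
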